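(* Let $a,\lambda\in\mathbb{R}^n$ and $\beta\in\mathbb{R}^m$ with $\|a\|=\|\lambda\|=\|\beta\|=1$, $\lambda\neq\pm a$, and $d\in\mathbb{R}^m$ with $\|d\|<1$, such that $\lambda^\mathsf{T} a+d^\mathsf{T}\beta\ge0$. Let $$x_\beta=\sqrt{\tfrac{1-(d^\mathsf{T}\beta)^2}{1-(\lambda^\mathsf{T} a)^2}}\,\lambda-\Big(d^\mathsf{T}\beta+\lambda^\mathsf{T} a\sqrt{\tfrac{1-(d^\mathsf{T}\beta)^2}{1-(\lambda^\mathsf{T} a)^2}}\Big)a$$ (the optimal solution of $\max_x\{\lambda^\mathsf{T} x:\|x\|\le1,\ a^\mathsf{T} x+d^\mathsf{T}\beta\le0\}$), and $\phi_\lambda(\beta)=\max_x\{\lambda^\mathsf{T} x:\|x\|\le1,\ a^\mathsf{T} x+d^\mathsf{T}\beta\le0\}$. Then every sequence $(x_k)_k$ in the span $\langle\lambda,a\rangle$ converging to $x_\beta$ with $\|x_k\|=1$ and $a^\mathsf{T} x_k+d^\mathsf{T}\beta<0$ for all $k$ satisfies $$\lim_{k\to\infty}\frac{\lambda^\mathsf{T}(x_k-x_\beta)}{a^\mathsf{T}(x_k-x_\beta)}=\frac{d^\mathsf{T}\beta+\lambda^\mathsf{T} a\,\phi_\lambda(\beta)}{\phi_\lambda(\beta)+d^\mathsf{T}\beta\,\lambda^\mathsf{T} a}.$$ Moreover, such sequences always exist.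
   Context: $\|\cdot\|$ is the Euclidean norm; $\langle\lambda,a\rangle$ denotes the linear span of $\lambda$ and $a$. *)

From HB Require Import structures.
From mathcomp Require Import all_boot all_order all_algebra.
From mathcomp Require Import all_classical all_reals all_analysis.
Set Implicit Arguments. Unset Strict Implicit. Unset Printing Implicit Defensive.
Import Order.TTheory GRing.Theory Num.Theory.
Import numFieldNormedType.Exports.
Local Open Scope classical_set_scope.
Local Open Scope ring_scope.

Definition dotv (R : realType) (n : nat) (u v : 'rV[R]_n) : R :=
  \sum_(i < n) u 0 i * v 0 i.

Definition enorm (R : realType) (n : nat) (u : 'rV[R]_n) : R :=
  Num.sqrt (dotv u u).

Definition in_span2 (R : realType) (n : nat) (lam a x : 'rV[R]_n) : Prop :=
  exists s t : R, x = s *: lam + t *: a.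

Definition phi_lam (R : realType) (n m : nat) (lam a : 'rV[R]_n)
  (d beta : 'rV[R]_m) : R :=
  sup [set y : R | exists x : 'rV[R]_n,
         y = dotv lam x /\ enorm x <= 1 /\ dotv a x + dotv d beta <= 0].

Definition x_beta (R : realType) (n m : nat) (lam a : 'rV[R]_n)
  (d beta : 'rV[R]_m) : 'rV[R]_n :=
  let s := Num.sqrt ((1 - (dotv d beta) ^+ 2) / (1 - (dotv lam a) ^+ 2)) in
  s *: lam - (dotv d beta + dotv lam a * s) *: a.

From HB Require Import structures.
From mathcomp Require Import all_boot all_order all_algebra.
From mathcomp Require Import all_classical all_reals all_analysis.
From mathcomp Require Import ring lra.
Import Order.TTheory GRing.Theory Num.Theory.
Import numFieldNormedType.Exports.
Local Open Scope classical_set_scope.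
Local Open Scope ring_scope.

(* Everything happens in the plane spanned by [lam] and [a]. With [c = lam.a], a vector [x]
   of this plane is determined by [L = lam.x] and [A = a.x], and
   [(1 - c^2) |x|^2 = L^2 - 2 c L A + A^2], an inequality [<=] for vectors outside the plane.
   Maximising [L] over the unit ball under [A <= -d.beta] is therefore a problem about an
   ellipse in the (L, A)-plane; the hypothesis [0 <= lam.a + d.beta] makes the ellipse's point
   [(lam.x_beta, -d.beta)] on the line [A = -d.beta] the maximiser. For two points of the
   ellipse the quadratic form factors along the chord,
   [(L - L0) (L + L0 - 2 c A) = (A - A0) (2 c L0 - A - A0)],
   so the slopes of chords towards [x_beta] tend to the slope of the tangent there. Sequences
   of the required kind move from [x_beta] along the unit circle of the plane, in the
   direction that decreases [a.x]. *)

Section InnerProduct.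
Context {R : realType} {n : nat}.
Implicit Types (u v w : 'rV[R]_n) (r : R).

Lemma dotvC u v : dotv u v = dotv v u.
Proof. by apply: eq_bigr => i _; rewrite mulrC. Qed.

Lemma dotvDr u v w : dotv u (v + w) = dotv u v + dotv u w.
Proof. by rewrite /dotv -big_split; apply: eq_bigr => i _; rewrite mxE mulrDr. Qed.

Lemma dotvZr u r v : dotv u (r *: v) = r * dotv u v.
Proof. by rewrite /dotv mulr_sumr; apply: eq_bigr => i _; rewrite mxE mulrCA. Qed.

Lemma dotvNr u v : dotv u (- v) = - dotv u v.
Proof. by rewrite -scaleN1r dotvZr mulN1r. Qed.

Lemma dotvBr u v w : dotv u (v - w) = dotv u v - dotv u w.
Proof. by rewrite dotvDr dotvNr. Qed.

Lemma dotvDl u v w : dotv (v + w) u = dotv v u + dotv w u.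
Proof. by rewrite dotvC dotvDr !(dotvC u). Qed.

Lemma dotvZl u r v : dotv (r *: v) u = r * dotv v u.
Proof. by rewrite dotvC dotvZr dotvC. Qed.

Lemma dotvNl u v : dotv (- v) u = - dotv v u.
Proof. by rewrite dotvC dotvNr dotvC. Qed.

Lemma dotvBl u v w : dotv (v - w) u = dotv v u - dotv w u.
Proof. by rewrite dotvDl dotvNl. Qed.

Lemma dotv_ge0 u : 0 <= dotv u u.
Proof. by apply: sumr_ge0 => i _; rewrite -expr2 sqr_ge0. Qed.

Lemma dotv_eq0 u : dotv u u = 0 -> u = 0.
Proof.
move=> /eqP; rewrite psumr_eq0 => [/allP u0|i _]; last by rewrite -expr2 sqr_ge0.
apply/rowP => i; rewrite mxE.
by have := u0 i (mem_index_enum _); rewrite -expr2 sqrf_eq0 => /eqP.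
Qed.

Lemma enorm_eq1 u : enorm u = 1 <-> dotv u u = 1.
Proof.
split=> [u1|uu]; last by rewrite /enorm uu sqrtr1.
by rewrite -(sqr_sqrtr (dotv_ge0 u)) -/(enorm u) u1 expr1n.
Qed.

Lemma enorm_le1 u : (enorm u <= 1) = (dotv u u <= 1).
Proof. by rewrite /enorm -{1}sqrtr1 ler_sqrt ?ler01. Qed.

Lemma enorm_lt1 u : (enorm u < 1) = (dotv u u < 1).
Proof. by rewrite /enorm -{1}sqrtr1 ltr_sqrt ?ltr01. Qed.

Lemma dotv_sub_proj u v : dotv u u = 1 ->
  dotv (v - dotv u v *: u) (v - dotv u v *: u) = dotv v v - dotv u v ^+ 2.
Proof. by move=> uu; rewrite !(dotvBl, dotvBr, dotvZl, dotvZr) uu (dotvC v u); ring. Qed.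

Lemma sqr_dotv_le u v : dotv u u = 1 -> dotv u v ^+ 2 <= dotv v v.
Proof. by move=> uu; rewrite -subr_ge0 -dotv_sub_proj // dotv_ge0. Qed.

Lemma sqr_dotv_lt1 u v : dotv u u = 1 -> dotv v v = 1 -> v != u -> v != - u ->
  dotv v u ^+ 2 < 1.
Proof.
move=> uu vv vNu vNNu; rewrite lt_neqAle dotvC -{2}vv sqr_dotv_le // andbT.
apply/eqP => uv1.
have v_eq : v = dotv u v *: u.
  by apply/eqP; rewrite -subr_eq0; apply/eqP/dotv_eq0; rewrite dotv_sub_proj // vv uv1 subrr.
move/eqP: uv1; rewrite sqrf_eq1 => /orP[] /eqP uv; rewrite uv ?scaleN1r ?scale1r in v_eq.
- by rewrite v_eq eqxx in vNu.
- by rewrite v_eq eqxx in vNNu.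
Qed.

Lemma cvg_dotv v (x : nat -> 'rV[R]_n) u : x @ \oo --> u ->
  (fun k => dotv v (x k)) @ \oo --> dotv v u.
Proof.
move=> x_cvg; apply: (@cvg_big R _ +%R 0 xpredT (@add_continuous R^o) _ \oo
  (index_enum 'I_n) (fun i k => v 0 i * x k 0 i) (fun i => v 0 i * u 0 i)) => i _.
by apply: cvgMr; exact: (cvg_comp _ _ x_cvg (@coord_continuous R 1 n 0 i u)).
Qed.

End InnerProduct.

Definition gram_form {R : numDomainType} (c L A : R) : R :=
  L ^+ 2 - 2 * c * L * A + A ^+ 2.

Section GramForm.
Context {R : realType}.
Implicit Types c : R.

Lemma gram_form_max c (L0 A0 L A : R) : c ^+ 2 < 1 -> 0 < L0 - c * A0 -> 0 <= c * L0 - A0 ->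
  gram_form c L A <= gram_form c L0 A0 -> A <= A0 -> L <= L0.
Proof.
move=> c1 normal_gt0 tangent_ge0 QL AA0.
pose q := (L - L0 - c * (A - A0)) ^+ 2 + (1 - c ^+ 2) * (A - A0) ^+ 2.
have q_ge0 : 0 <= q by rewrite addr_ge0 ?sqr_ge0 // mulr_ge0 ?sqr_ge0 // subr_ge0 ltW.
have key : 2 * (L0 - c * A0) * (L - L0) = gram_form c L A - gram_form c L0 A0
    + 2 * ((c * L0 - A0) * (A - A0)) - q by rewrite /q /gram_form; ring.
have : (c * L0 - A0) * (A - A0) <= 0 by rewrite mulr_ge0_le0 // subr_le0.
have : (L0 - c * A0) * (L - L0) <= 0 by nra.
by rewrite pmulr_rle0 // subr_le0.
Qed.

Lemma gram_form_secant_cvg c (L0 A0 : R) (L A : nat -> R) :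
  (forall k, gram_form c (L k) (A k) = gram_form c L0 A0) ->
  L @ \oo --> L0 -> A @ \oo --> A0 -> (forall k, A k != A0) -> L0 - c * A0 != 0 ->
  (fun k => (L k - L0) / (A k - A0)) @ \oo --> (c * L0 - A0) / (L0 - c * A0).
Proof.
move=> onQ L_cvg A_cvg A_neq normal_neq0.
have chord k : (L k - L0) * (L k + L0 - 2 * c * A k) = (A k - A0) * (2 * c * L0 - A k - A0).
  transitivity ((A k - A0) * (2 * c * L0 - A k - A0)
                + (gram_form c (L k) (A k) - gram_form c L0 A0)).
    by rewrite /gram_form; ring.
  by rewrite onQ subrr addr0.
have den_cvg : (fun k => L k + L0 - 2 * c * A k) @ \oo --> L0 + L0 - 2 * c * A0.
  by apply: cvgB; [apply: cvgD => //; exact: cvg_cst | exact: cvgMr].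
have num_cvg : (fun k => 2 * c * L0 - A k - A0) @ \oo --> 2 * c * L0 - A0 - A0.
  by apply: cvgB; [apply: cvgB => //; exact: cvg_cst | exact: cvg_cst].
have den_neq0 : L0 + L0 - 2 * c * A0 != 0.
  by rewrite (_ : _ - _ = 2 * (L0 - c * A0)) ?mulf_neq0 ?pnatr_eq0 //; ring.
have -> : (c * L0 - A0) / (L0 - c * A0) = (2 * c * L0 - A0 - A0) / (L0 + L0 - 2 * c * A0).
  by apply/eqP; rewrite eqr_div //; apply/eqP; ring.
apply: cvg_trans (cvgM num_cvg (cvgV den_neq0 den_cvg)).
apply: near_eq_cvg; near=> k.
have den_k : L k + L0 - 2 * c * A k != 0 by near: k; exact: cvgr_neq0 den_cvg den_neq0.
have A_k : A k - A0 != 0 by rewrite subr_eq0 A_neq.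
rewrite /= -[LHS]/((_ - _ - _) / _); apply/eqP; rewrite eqr_div //.
by rewrite chord mulrC.
Unshelve. all: by end_near.
Qed.

End GramForm.

Lemma sqr_ratio_add_mul_ge0 {R : realFieldType} (c delta s : R) : c ^+ 2 < 1 -> 0 <= s ->
  s ^+ 2 * (1 - c ^+ 2) = 1 - delta ^+ 2 -> 0 <= c + delta -> 0 <= delta + c * s.
Proof.
move=> c1 s_ge0 s2 cd; have [c_ge0|c_lt0] := lerP 0 c; last first.
  have : s ^+ 2 <= 1 by nra.
  rewrite expr_le1 // => s_le1.
  nra.
have [delta_ge0|delta_lt0] := lerP 0 delta; first by nra.
have : 1 <= s ^+ 2 by nra.
rewrite expr_ge1 // => s_ge1.
nra.
Qed.

Lemma sqr_lt1_mul_lt1 {R : realFieldType} (c delta : R) : c ^+ 2 < 1 -> delta ^+ 2 < 1 ->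
  (1 - c ^+ 2) * delta < 1.
Proof.
move=> c1 d1; have c2_ge0 := sqr_ge0 c; have : delta < 1 by nra.
by have [|] := lerP delta 0; nra.
Qed.

Section Plane.
Context {R : realType} {n : nat}.
Implicit Types (u v l a x : 'rV[R]_n).

Lemma gram_form_le l a x : dotv l l = 1 -> dotv a a = 1 -> dotv l a ^+ 2 < 1 ->
  gram_form (dotv l a) (dotv l x) (dotv a x) <= (1 - dotv l a ^+ 2) * dotv x x.
Proof.
move=> ll aa c1; set c := dotv l a; set L := dotv l x; set A := dotv a x.
(* [w] is [1 - c^2] times the component of [x] orthogonal to [l] and [a]. *)
pose w := (1 - c ^+ 2) *: x - ((L - c * A) *: l + (A - c * L) *: a).
have ww : dotv w w = (1 - c ^+ 2) * ((1 - c ^+ 2) * dotv x x - gram_form c L A).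
  rewrite !(dotvBl, dotvBr, dotvDl, dotvDr, dotvZl, dotvZr) ll aa.
  by rewrite (dotvC a l) (dotvC x l) (dotvC x a) -/c -/L -/A /gram_form; ring.
by have := dotv_ge0 w; rewrite ww pmulr_rge0 ?subr_gt0 // subr_ge0.
Qed.

Lemma gram_form_span2 l a x : dotv l l = 1 -> dotv a a = 1 -> in_span2 l a x ->
  gram_form (dotv l a) (dotv l x) (dotv a x) = (1 - dotv l a ^+ 2) * dotv x x.
Proof.
move=> ll aa [s [t ->]].
by rewrite !(dotvDl, dotvDr, dotvZl, dotvZr) ll aa (dotvC a l) /gram_form; ring.
Qed.

Lemma in_span2_lincomb l a u v (k1 k2 : R) : in_span2 l a u -> in_span2 l a v ->
  in_span2 l a (k1 *: u + k2 *: v).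
Proof.
move=> [s [t ->]] [s' [t' ->]]; exists (k1 * s + k2 * s'), (k1 * t + k2 * t').
by rewrite !scalerDr !scalerA !scalerDl addrACA.
Qed.

End Plane.

Section Arc.
Context {R : realType} {n : nat}.
Implicit Types (u v e : 'rV[R]_n) (r : R).

(* Rational parametrisation of the circle through [u] in the direction of [e]. *)
Definition arc u e r : 'rV[R]_n :=
  ((1 - r ^+ 2 * dotv e e) / (1 + r ^+ 2 * dotv e e)) *: u
  + (2 * r / (1 + r ^+ 2 * dotv e e)) *: e.

Lemma arc_den_gt0 e r : 0 < 1 + r ^+ 2 * dotv e e.
Proof. by rewrite ltr_wpDr ?ltr01 // mulr_ge0 ?sqr_ge0 ?dotv_ge0. Qed.

Lemma dotv_arc v u e r : dotv v (arc u e r) =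
  ((1 - r ^+ 2 * dotv e e) * dotv v u + 2 * r * dotv v e) / (1 + r ^+ 2 * dotv e e).
Proof. by rewrite /arc dotvDr !dotvZr [RHS]mulrDl; congr (_ + _); apply: mulrAC. Qed.

Lemma dotv_arc_unit u e r : dotv u u = 1 -> dotv u e = 0 ->
  dotv (arc u e r) (arc u e r) = 1.
Proof.
move=> uu ue; have := arc_den_gt0 e r; rewrite lt0r => /andP[den0 _].
by rewrite !(dotvDl, dotvDr, dotvZl, dotvZr) uu ue (dotvC e u) ue; field.
Qed.

Lemma cvg_arc u e (h : nat -> R) : h @ \oo --> 0 ->
  (fun k => arc u e (h k)) @ \oo --> u.
Proof.
move=> h0; set E := dotv e e.
suff : (fun k => arc u e (h k)) @ \oo -->
    ((1 - 0 ^+ 2 * E) / (1 + 0 ^+ 2 * E)) *: u + (2 * 0 / (1 + 0 ^+ 2 * E)) *: e.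
  by rewrite expr0n !(mul0r, mulr0, subr0, addr0, invr1, mulr1, scale1r, scale0r).
have hE : (fun k => h k ^+ 2 * E) @ \oo --> 0 ^+ 2 * E.
  by apply: cvgMl; rewrite expr2; apply: cvgM.
have den_cvg : (fun k => (1 + h k ^+ 2 * E)^-1) @ \oo --> (1 + 0 ^+ 2 * E)^-1.
  apply: cvgV; first by rewrite expr0n mul0r addr0 oner_neq0.
  by apply: cvgD => //; exact: cvg_cst.
apply: cvgD; apply: cvgZ; try exact: cvg_cst; apply: cvgM => //.
- by apply: cvgB => //; exact: cvg_cst.
- exact: cvgMr.
Qed.

End Arc.

Section OptimalSolution.
Variables (R : realType) (n m : nat) (a lam : 'rV[R]_n) (beta d : 'rV[R]_m).
Hypotheses (a_unit : dotv a a = 1) (lam_unit : dotv lam lam = 1).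
Hypotheses (beta_unit : dotv beta beta = 1) (d_lt1 : dotv d d < 1).
Hypotheses (lam_neq_a : lam != a) (lam_neq_Na : lam != - a).
Hypothesis lam_a_add_d_beta_ge0 : 0 <= dotv lam a + dotv d beta.

Local Notation c := (dotv lam a).
Local Notation delta := (dotv d beta).
Local Notation xb := (x_beta lam a d beta).
Let s : R := Num.sqrt ((1 - delta ^+ 2) / (1 - c ^+ 2)).
Let Lmax : R := s * (1 - c ^+ 2) - c * delta.

Let c_sqr_lt1 : c ^+ 2 < 1.
Proof. exact: sqr_dotv_lt1. Qed.

Let delta_sqr_lt1 : delta ^+ 2 < 1.
Proof. by rewrite dotvC; exact: le_lt_trans (sqr_dotv_le beta d beta_unit) d_lt1. Qed.

Let s_sqr : s ^+ 2 * (1 - c ^+ 2) = 1 - delta ^+ 2.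
Proof.
by rewrite sqr_sqrtr ?divfK ?divr_ge0 ?subr_ge0 ?ltW // gt_eqF // subr_gt0.
Qed.

Let s_gt0 : 0 < s.
Proof. by rewrite sqrtr_gt0 divr_gt0 // subr_gt0. Qed.

Let normal_gt0 : 0 < Lmax - c * - delta.
Proof. by rewrite mulrN opprK subrK mulr_gt0 // subr_gt0. Qed.

Let tangent_ge0 : 0 <= c * Lmax - - delta.
Proof.
have -> : c * Lmax - - delta = (1 - c ^+ 2) * (delta + c * s) by rewrite /Lmax; ring.
apply: mulr_ge0; first by rewrite subr_ge0 ltW.
exact: sqr_ratio_add_mul_ge0 c_sqr_lt1 (ltW s_gt0) s_sqr lam_a_add_d_beta_ge0.
Qed.

Let x_beta_in_span2 : in_span2 lam a xb.
Proof. by exists s, (- (delta + c * s)); rewrite scaleNr. Qed.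

Let dotv_lam_x_beta : dotv lam xb = Lmax.
Proof. by rewrite dotvBr !dotvZr lam_unit -/s /Lmax; ring. Qed.

Let dotv_a_x_beta : dotv a xb = - delta.
Proof. by rewrite dotvBr !dotvZr a_unit (dotvC a lam); ring. Qed.

Let gram_form_x_beta : gram_form c Lmax (- delta) = 1 - c ^+ 2.
Proof.
rewrite /gram_form /Lmax.
transitivity ((s ^+ 2 * (1 - c ^+ 2) + delta ^+ 2) * (1 - c ^+ 2)); first by ring.
by rewrite s_sqr; ring.
Qed.

Let x_beta_unit : dotv xb xb = 1.
Proof.
have c1 : 1 - c ^+ 2 != 0 by rewrite gt_eqF // subr_gt0.
apply: (mulfI c1); rewrite mulr1 -gram_form_span2 //.
by rewrite dotv_lam_x_beta dotv_a_x_beta gram_form_x_beta.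
Qed.

Let feasible_le_Lmax x : dotv x x <= 1 -> dotv a x + delta <= 0 -> dotv lam x <= Lmax.
Proof.
move=> x1 ax; apply: (gram_form_max _ _ _ _ (dotv a x) c_sqr_lt1 normal_gt0 tangent_ge0); last by lra.
rewrite gram_form_x_beta; apply: le_trans (gram_form_le lam a x lam_unit a_unit c_sqr_lt1) _.
by rewrite ler_piMr // subr_ge0 ltW.
Qed.

Lemma phi_lam_x_beta : phi_lam lam a d beta = dotv lam xb.
Proof.
rewrite dotv_lam_x_beta /phi_lam; set F := [set y | _].
have F_Lmax : F Lmax.
  by exists xb; rewrite dotv_lam_x_beta enorm_le1 x_beta_unit dotv_a_x_beta addNr.
have ub_Lmax : ubound F Lmax.
  by move=> _ [x [-> [x1 ax]]]; apply: feasible_le_Lmax; rewrite -?enorm_le1.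
apply: le_anti; rewrite ge_sup //=; last by exists Lmax.
by apply: ub_le_sup => //; exists Lmax.
Qed.

Lemma cvg_slope_x_beta (x : nat -> 'rV[R]_n) :
  (forall k, in_span2 lam a (x k)) -> (forall k, enorm (x k) = 1) ->
  (forall k, dotv a (x k) + delta < 0) -> x @ \oo --> xb ->
  (fun k => dotv lam (x k - xb) / dotv a (x k - xb)) @ \oo -->
    (delta + c * phi_lam lam a d beta) / (phi_lam lam a d beta + delta * c).
Proof.
move=> x_span x_unit x_neg x_cvg.
rewrite phi_lam_x_beta dotv_lam_x_beta.
have -> : (delta + c * Lmax) / (Lmax + delta * c) = (c * Lmax - - delta) / (Lmax - c * - delta).
  by rewrite mulrN !opprK addrC (mulrC delta).
have -> : (fun k => dotv lam (x k - xb) / dotv a (x k - xb)) =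
    (fun k => (dotv lam (x k) - Lmax) / (dotv a (x k) - - delta)).
  by apply/funext => k; rewrite (dotvBr lam) (dotvBr a) dotv_lam_x_beta dotv_a_x_beta.
apply: gram_form_secant_cvg.
- move=> k; rewrite gram_form_span2 // gram_form_x_beta.
  by have /enorm_eq1 -> := x_unit k; rewrite mulr1.
- by rewrite -dotv_lam_x_beta; exact: cvg_dotv.
- by rewrite -dotv_a_x_beta; exact: cvg_dotv.
- by move=> k; rewrite -subr_eq0 opprK lt_eqF.
- exact: lt0r_neq0.
Qed.

Lemma exists_cvg_x_beta : exists x : nat -> 'rV[R]_n,
  (forall k, in_span2 lam a (x k)) /\ (forall k, enorm (x k) = 1) /\
  (forall k, dotv a (x k) + delta < 0) /\ x @ \oo --> xb.
Proof.
set S := Lmax - c * - delta.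
pose e := - (delta *: lam + Lmax *: a).
have e_span : in_span2 lam a e by exists (- delta), (- Lmax); rewrite /e opprD -!scaleNr.
have x_beta_e : dotv xb e = 0.
  rewrite /e dotvNr dotvDr !dotvZr (dotvC xb lam) (dotvC xb a).
  by rewrite dotv_lam_x_beta dotv_a_x_beta; ring.
have a_e : dotv a e = - S.
  by rewrite /e /S dotvNr dotvDr !dotvZr a_unit (dotvC a lam); ring.
have e_e : dotv e e = 1 - c ^+ 2.
  rewrite -gram_form_x_beta /e dotvNl dotvNr opprK.
  by rewrite !(dotvDl, dotvDr, dotvZl, dotvZr) lam_unit a_unit (dotvC a lam) /gram_form; ring.
pose h k := S * harmonic k.
exists (fun k => arc xb e (h k)); split; [|split; [|split]].
- by move=> k; apply: in_span2_lincomb.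
- by move=> k; apply/enorm_eq1/dotv_arc_unit.
- move=> k; have h_gt0 : 0 < h k by rewrite mulr_gt0 ?harmonic_gt0.
  have h_le : h k <= S by rewrite ler_piMr ?(ltW normal_gt0) // /harmonic /= invf_le1 // ler1n.
  have := arc_den_gt0 e (h k); rewrite e_e => den_gt0.
  rewrite dotv_arc dotv_a_x_beta a_e e_e -(ltr_pM2r den_gt0) mul0r mulrDl divfK ?gt_eqF //.
  have -> : (1 - h k ^+ 2 * (1 - c ^+ 2)) * - delta + 2 * h k * - S
      + delta * (1 + h k ^+ 2 * (1 - c ^+ 2)) = 2 * h k * (h k * ((1 - c ^+ 2) * delta) - S).
    by ring.
  rewrite pmulr_rlt0 ?mulr_gt0 ?harmonic_gt0 // subr_lt0; apply: lt_le_trans h_le.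
  by rewrite gtr_pMr // sqr_lt1_mul_lt1.
- apply: cvg_arc; rewrite -(mulr0 S).
  by apply: cvgMr; exact: cvg_harmonic.
Qed.

End OptimalSolution.

Theorem lemma2 (R : realType) (n m : nat) (a lam : 'rV[R]_n) (beta d : 'rV[R]_m) :
  enorm a = 1 -> enorm lam = 1 -> enorm beta = 1 ->
  lam != a -> lam != - a ->
  enorm d < 1 ->
  0 <= dotv lam a + dotv d beta ->
  (forall x : nat -> 'rV[R]_n,
     (forall k, in_span2 lam a (x k)) ->
     (forall k, enorm (x k) = 1) ->
     (forall k, dotv a (x k) + dotv d beta < 0) ->
     x @ \oo --> x_beta lam a d beta ->
     (fun k => dotv lam (x k - x_beta lam a d beta)
               / dotv a (x k - x_beta lam a d beta)) @ \oo -->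
       (dotv d beta + dotv lam a * phi_lam lam a d beta)
         / (phi_lam lam a d beta + dotv d beta * dotv lam a))
  /\
  (exists x : nat -> 'rV[R]_n,
     (forall k, in_span2 lam a (x k)) /\
     (forall k, enorm (x k) = 1) /\
     (forall k, dotv a (x k) + dotv d beta < 0) /\
     x @ \oo --> x_beta lam a d beta).
Proof.
move=> /enorm_eq1 a_unit /enorm_eq1 lam_unit /enorm_eq1 beta_unit lam_neq_a lam_neq_Na.
rewrite enorm_lt1 => d_lt1 lam_a_add_d_beta_ge0; split.
- exact: cvg_slope_x_beta.
- exact: exists_cvg_x_beta.
Qed.
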